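(* Let $X$ and $Y$ be two configurations of the same polygonal chain (open or closed), each bar of which carries a symmetric slender adornment with that bar as base, and suppose the configuration $Y$ of the base chain is an expansion of the configuration $X$. If the adornments attached to the bars of $X$ pairwise do not overlap, then the corresponding adornments attached to the bars of $Y$ also pairwise do not overlap.
   Context: An adornment is a compact simply connected region $S\subset\mathbb{R}^2$ together with a segment $[x,y]$, $x\ne y$, with endpoints on the boundary of $S$ and $[x,y]\subseteq S$ (the base); its boundary consists of two arcs from $x$ to $y$ (the sides). It is slender if, for a point $p$ moving along either side from $x$ to $y$, $\|p-x\|$ is nondecreasing and $\|p-y\|$ is nonincreasing; it is symmetric if invariant under reflection in the line through $x,y$. A polygonal chain consists of vertices $v_0,\dots,v_n$ and bars $[v_{i-1},v_i]$ (for a closed chain also a bar $[v_n,v_0]$); a configuration assigns positions to the vertices preserving bar lengths. An adornment attached to a bar is carried to another configuration by the rigid motion taking the bar to its new position. Points of the chain in two configurations correspond via these rigid motions of the bars. Configuration $Y$ is an expansion of configuration $X$ if for any two points $p,q$ of the chain in $X$, the corresponding points $p',q'$ in $Y$ satisfy $\|p'-q'\|\ge\|p-q\|$. Two adornments (on different bars) overlap if some point of one lies in the interior of the other; touching along boundaries is allowed. *)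

(* Points of the plane are pairs (R * R) over an
   abstract real type, with the product (= Euclidean) topology; distances are
   Euclidean. *)
From HB Require Import structures.
From mathcomp Require Import all_boot all_order all_algebra.
From mathcomp Require Import all_classical all_reals all_analysis.
Set Implicit Arguments.
Unset Strict Implicit.
Unset Printing Implicit Defensive.
Import Order.TTheory GRing.Theory Num.Theory.
Import numFieldNormedType.Exports.
Local Open Scope classical_set_scope.
Local Open Scope ring_scope.

Section Plane.
Variable R : realType.

Definition pt := (R * R)%type.

Definition edist (p q : pt) : R :=
  Num.sqrt ((p.1 - q.1) ^+ 2 + (p.2 - q.2) ^+ 2).

Definition lerp (a b : pt) (t : R) : pt :=
  ((1 - t) * a.1 + t * b.1, (1 - t) * a.2 + t * b.2).

Definition unit01 : set R := `[0, 1]%classic.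

Definition segment (a b : pt) : set pt := [set lerp a b t | t in unit01].

Definition boundary (S : set pt) : set pt := closure S `\` interior S.

Definition simply_connected (S : set pt) : Prop :=
  [/\ S !=set0,
      (forall a b, S a -> S b -> exists g : R -> pt,
          [/\ {within unit01, continuous g}, g 0 = a, g 1 = b &
              g @` unit01 `<=` S]) &
      (forall g : R -> pt, {within unit01, continuous g} ->
          g @` unit01 `<=` S -> g 0 = g 1 ->
          exists H : R * R -> pt,
            [/\ {within unit01 `*` unit01, continuous H},
                H @` (unit01 `*` unit01) `<=` S,
                (forall s, unit01 s -> H (s, 0) = g s),
                (forall s, unit01 s -> H (s, 1) = g 0) &
                (forall t, unit01 t -> H (0, t) = g 0 /\ H (1, t) = g 0)])].

Definition arc_from_to (g : R -> pt) (a b : pt) : Prop :=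
  [/\ {within unit01, continuous g}, {in unit01 &, injective g},
      g 0 = a & g 1 = b].

Definition adornment_with_sides (S : set pt) (x y : pt) (g1 g2 : R -> pt) :=
  [/\ compact S /\ simply_connected S /\ x != y,
      boundary S x /\ boundary S y,
      segment x y `<=` S,
      arc_from_to g1 x y /\ arc_from_to g2 x y &
      boundary S = g1 @` unit01 `|` g2 @` unit01].

Definition slender_side (g : R -> pt) (x y : pt) : Prop :=
  forall s t, unit01 s -> unit01 t -> s <= t ->
    edist (g s) x <= edist (g t) x /\ edist (g t) y <= edist (g s) y.

Definition reflect_line (x y p : pt) : pt :=
  let d := (y.1 - x.1, y.2 - x.2) in
  let c := ((p.1 - x.1) * d.1 + (p.2 - x.2) * d.2) / (d.1 ^+ 2 + d.2 ^+ 2) in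
  let q := (x.1 + c * d.1, x.2 + c * d.2) in
  (2 * q.1 - p.1, 2 * q.2 - p.2).

Definition symmetric_set (S : set pt) (x y : pt) : Prop :=
  forall p, S p <-> S (reflect_line x y p).

Definition sym_slender_adornment (S : set pt) (x y : pt) : Prop :=
  (exists g1 g2, adornment_with_sides S x y g1 g2 /\
                 slender_side g1 x y /\ slender_side g2 x y) /\
  symmetric_set S x y.

Definition overlap (A B : set pt) : Prop :=
  exists p, (A p /\ interior B p) \/ (B p /\ interior A p).

Definition plane_isometry (f : pt -> pt) : Prop :=
  forall p q, edist (f p) (f q) = edist p q.

End Plane.

(* Polygonal chains with vertices v_0, ..., v_n (indexed by 'I_n.+1).
   Bar i (for i : 'I_n.+1) joins v_i and v_(i+1 mod n+1); it is a bar of the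
   chain iff i < n (open chain) or always (closed chain, last bar [v_n, v_0]). *)
Definition is_bar (closed : bool) (n : nat) (i : 'I_n.+1) : bool :=
  closed || (i < n)%N.

Definition bar_end (n : nat) (i : 'I_n.+1) : 'I_n.+1 := ordS i.

Definition chain_point (R : realType) (n : nat) (V : 'I_n.+1 -> pt R)
  (i : 'I_n.+1) (t : R) : pt R := lerp (V i) (V (bar_end i)) t.

Definition same_chain (R : realType) (closed : bool) (n : nat)
  (X Y : 'I_n.+1 -> pt R) : Prop :=
  forall i, is_bar closed i ->
    edist (Y i) (Y (bar_end i)) = edist (X i) (X (bar_end i)).

Definition expansion (R : realType) (closed : bool) (n : nat)
  (X Y : 'I_n.+1 -> pt R) : Prop :=
  forall i j, is_bar closed i -> is_bar closed j ->
  forall s t, unit01 s -> unit01 t ->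
    edist (chain_point X i s) (chain_point X j t)
      <= edist (chain_point Y i s) (chain_point Y j t).

From Pilot Require Import Defs.
From HB Require Import structures.
From mathcomp Require Import all_boot all_order all_algebra.
From mathcomp Require Import all_classical all_reals all_analysis.
From mathcomp Require Import ring lra.
Import Order.TTheory GRing.Theory Num.Theory.
Import numFieldNormedType.Exports.
Local Open Scope classical_set_scope.
Local Open Scope ring_scope.
Set Implicit Arguments.
Unset Strict Implicit.
Unset Printing Implicit Defensive.

(* A symmetric slender adornment [S] on the base [[x, y]] is a down-set for the
   two distances to [x] and [y]: if [c] lies in [S], so does every [p] with
   [|p x| <= |c x|] and [|p y| <= |c y|], and [p] is interior when both
   inequalities are strict.  Indeed slenderness and symmetry force two boundary
   points that are strictly ordered in both distances onto the base line, where
   this cannot happen.  Now let [q = f_a p0] be a moved point of the adornment of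
   bar [a] lying in the interior of the moved adornment of bar [b].  Pushing [q]
   away from the line through the ends of bar [b] gives a point [f_b p1] of that
   adornment strictly farther from both ends.  As [Y] expands [X], Kirszbraun's
   theorem applied to the four ends of the two bars yields [p] with
   [|p X_i| <= |q Y_i|] for each of them; by the down-set property [p] lies in
   the adornment of bar [a] and in the interior of the adornment of bar [b]. *)

Lemma unit01P (R : realType) (t : R) : unit01 t <-> 0 <= t <= 1.
Proof. by rewrite /unit01 /= in_itv. Qed.

Lemma unit01_0 {R : realType} : unit01 (0 : R). Proof. by apply/unit01P; rewrite lexx ler01. Qed.
Lemma unit01_1 {R : realType} : unit01 (1 : R). Proof. by apply/unit01P; rewrite lexx ler01. Qed.

Section PlaneGeometry.
Variable R : realType.
Implicit Types (p q x y z : pt R) (s t : R).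

Definition sqdist p q : R := (p.1 - q.1) ^+ 2 + (p.2 - q.2) ^+ 2.

Lemma sqdist_ge0 p q : 0 <= sqdist p q.
Proof. by rewrite addr_ge0 ?sqr_ge0. Qed.

Lemma sqdistC p q : sqdist p q = sqdist q p.
Proof. rewrite /sqdist; ring. Qed.

Lemma sqdistxx p : sqdist p p = 0.
Proof. by rewrite /sqdist !subrr expr0n addr0. Qed.

Lemma sqdist_gt0 p q : (0 < sqdist p q) = (p != q).
Proof.
apply/idP/idP => [|pq]; first by apply: contraTneq => ->; rewrite sqdistxx ltxx.
rewrite lt_def sqdist_ge0 andbT; apply: contra pq; rewrite paddr_eq0 ?sqr_ge0 //.
rewrite !sqrf_eq0 !subr_eq0 => /andP[/eqP e1 /eqP e2].
by rewrite [p]surjective_pairing [q]surjective_pairing e1 e2.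
Qed.

Lemma ler_edist p q p' q' : (Defs.edist p q <= Defs.edist p' q') = (sqdist p q <= sqdist p' q').
Proof. by rewrite ler_sqrt // sqdist_ge0. Qed.

Lemma eq_sqdist_of_edist p q p' q' : Defs.edist p q = Defs.edist p' q' -> sqdist p q = sqdist p' q'.
Proof. by move=> e; apply/eqP; rewrite eq_le -!ler_edist e lexx. Qed.

Lemma sqdist_isometry f p q : plane_isometry f -> sqdist (f p) (f q) = sqdist p q.
Proof. by move=> isof; apply: eq_sqdist_of_edist. Qed.

Lemma lerp0 p q : lerp p q 0 = p.
Proof. by rewrite /lerp subr0 !mul1r !mul0r !addr0 -surjective_pairing. Qed.

Lemma lerp1 p q : lerp p q 1 = q.
Proof. by rewrite /lerp subrr !mul0r !mul1r !add0r -surjective_pairing. Qed.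

(* The hypothesis says that the angle at [n] of the triangle [z n p] is not acute. *)
Lemma sqdist_lerp_lt n p z t : 0 <= t < 1 -> n != p ->
  sqdist n z + sqdist p n <= sqdist p z -> sqdist (lerp n p t) z < sqdist p z.
Proof.
move=> /andP[t0 t1]; rewrite -sqdist_gt0 sqdistC => np h.
have -> : sqdist (lerp n p t) z
    = sqdist p z + (1 - t) * (sqdist n z - sqdist p z) - (1 - t) * t * sqdist p n.
  by rewrite /lerp /sqdist /=; ring.
have u0 : 0 < 1 - t by lra.
have := mulr_gt0 u0 np; have := mulr_ge0 (mulr_ge0 (ltW u0) t0) (sqdist_ge0 p n).
have : (1 - t) * (sqdist n z - sqdist p z) <= (1 - t) * (- sqdist p n).
  by rewrite ler_pM2l //; lra.
lra.
Qed.

Section BaseFrame.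
Variables x y : pt R.
Hypothesis xy : x != y.

(* Coordinates of [p] in the orthogonal frame at [x] spanned by [y - x] and its
   rotation by a right angle, both scaled by [|x y|]. *)
Definition base_dot p := (p.1 - x.1) * (y.1 - x.1) + (p.2 - x.2) * (y.2 - x.2).
Definition base_cross p := (p.1 - x.1) * (y.2 - x.2) - (p.2 - x.2) * (y.1 - x.1).

Local Notation D := (sqdist y x).
Local Notation refl := (reflect_line x y).

Let D_gt0 : 0 < D. Proof. by rewrite sqdist_gt0 eq_sym. Qed.
Let D_neq0 : D != 0. Proof. exact: lt0r_neq0. Qed.

Lemma base_frame_sqdist p q :
  D * sqdist p q = (base_dot p - base_dot q) ^+ 2 + (base_cross p - base_cross q) ^+ 2.
Proof. rewrite /sqdist /base_dot /base_cross; ring. Qed.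

Lemma base_frame_sqdistx p : D * sqdist p x = base_dot p ^+ 2 + base_cross p ^+ 2.
Proof. rewrite /sqdist /base_dot /base_cross; ring. Qed.

Lemma base_frame_sqdisty p : D * sqdist p y = (D - base_dot p) ^+ 2 + base_cross p ^+ 2.
Proof. rewrite /sqdist /base_dot /base_cross; ring. Qed.

Lemma base_frame_inj p q : base_dot p = base_dot q -> base_cross p = base_cross q -> p = q.
Proof.
move=> ed ec.
have coord1 r : D * r.1 = D * x.1 + base_dot r * (y.1 - x.1) + base_cross r * (y.2 - x.2).
  by rewrite /base_dot /base_cross /sqdist; ring.
have coord2 r : D * r.2 = D * x.2 + base_dot r * (y.2 - x.2) - base_cross r * (y.1 - x.1).
  by rewrite /base_dot /base_cross /sqdist; ring.
rewrite [p]surjective_pairing [q]surjective_pairing.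
congr pair; apply: (mulfI D_neq0).
  by rewrite coord1 [RHS]coord1 ed ec.
by rewrite coord2 [RHS]coord2 ed ec.
Qed.

Lemma base_dot_reflect p : base_dot (refl p) = base_dot p.
Proof. rewrite /base_dot /reflect_line /=; field; exact: D_neq0. Qed.

Lemma base_cross_reflect p : base_cross (refl p) = - base_cross p.
Proof. rewrite /base_cross /reflect_line /=; field; exact: D_neq0. Qed.

Lemma reflect_lineK : involutive refl.
Proof.
by move=> p; apply: base_frame_inj; rewrite ?base_dot_reflect // !base_cross_reflect opprK.
Qed.

Lemma sqdist_reflectx p : sqdist (refl p) x = sqdist p x.
Proof.
apply: (mulfI D_neq0).
by rewrite !base_frame_sqdistx base_dot_reflect base_cross_reflect sqrrN.
Qed.

Lemma sqdist_reflecty p : sqdist (refl p) y = sqdist p y.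
Proof.
apply: (mulfI D_neq0).
by rewrite !base_frame_sqdisty base_dot_reflect base_cross_reflect sqrrN.
Qed.

Lemma sqdist_reflect p q : sqdist (refl p) (refl q) = sqdist p q.
Proof.
apply: (mulfI D_neq0).
by rewrite !base_frame_sqdist !base_dot_reflect !base_cross_reflect; ring.
Qed.

Lemma reflect_line_fixed p : refl p = p -> base_cross p = 0.
Proof. move=> /(congr1 base_cross); rewrite base_cross_reflect; lra. Qed.

Lemma eq_sqdist_base p q : sqdist p x = sqdist q x -> sqdist p y = sqdist q y ->
  p = q \/ p = refl q.
Proof.
move=> /(congr1 ( *%R D)) ex /(congr1 ( *%R D)) ey.
rewrite !base_frame_sqdistx in ex; rewrite !base_frame_sqdisty in ey.
have edot : base_dot p = base_dot q.
  have : 2 * D * (base_dot p - base_dot q) = 0.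
    transitivity
      ((base_dot p ^+ 2 + base_cross p ^+ 2) - (base_dot q ^+ 2 + base_cross q ^+ 2)
       - (((D - base_dot p) ^+ 2 + base_cross p ^+ 2)
          - ((D - base_dot q) ^+ 2 + base_cross q ^+ 2))); first by ring.
    by rewrite ex ey !subrr.
  by move/eqP; rewrite !mulf_eq0 pnatr_eq0 (negbTE D_neq0) subr_eq0 => /eqP.
have : (base_cross p - base_cross q) * (base_cross p + base_cross q) = 0.
  by rewrite -subr_sqr; move: ex; rewrite edot; lra.
move/eqP; rewrite mulf_eq0 => /orP[] /eqP ec; [left | right].
  by apply: base_frame_inj; lra.
by apply: base_frame_inj; rewrite ?base_dot_reflect ?base_cross_reflect //; lra.
Qed.

Lemma base_line_antichain p q : base_cross p = 0 -> base_cross q = 0 ->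
  sqdist p x <= D -> sqdist p y <= D -> sqdist q x <= D -> sqdist q y <= D ->
  sqdist p x < sqdist q x -> sqdist p y < sqdist q y -> False.
Proof.
have bnd u : base_cross u = 0 -> sqdist u x <= D -> sqdist u y <= D -> 0 <= base_dot u <= D.
  move=> cu ux uy; have := ler_wpM2l (ltW D_gt0) ux; have := ler_wpM2l (ltW D_gt0) uy.
  rewrite [D * sqdist u x]base_frame_sqdistx [D * sqdist u y]base_frame_sqdisty cu.
  rewrite expr0n /= !addr0.
  have := D_gt0; move: (base_dot u) => a Dp h1 h2.
  have a0 : 0 <= a by nra.
  by rewrite a0; nra.
move=> cp cq px py qx qy.
rewrite -[sqdist p x < _](ltr_pM2l D_gt0).
rewrite [D * sqdist p x]base_frame_sqdistx [D * sqdist q x]base_frame_sqdistx.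
rewrite -[sqdist p y < _](ltr_pM2l D_gt0).
rewrite [D * sqdist p y]base_frame_sqdisty [D * sqdist q y]base_frame_sqdisty.
rewrite cp cq expr0n /= !addr0.
move: (bnd p cp px py) (bnd q cq qx qy); move: (base_dot p) (base_dot q) => a b.
move=> /andP[a0 aD] /andP[b0 bD] hx hy.
have ab : a < b by nra.
have ba0 : 0 <= b - a by rewrite subr_ge0 ltW.
have s0 : 0 <= (D - a) + (D - b) by lra.
have := mulr_ge0 ba0 s0.
move: hy; nra.
Qed.

Lemma segment_foot p : exists2 n, segment x y n &
  sqdist n x + sqdist p n <= sqdist p x /\ sqdist n y + sqdist p n <= sqdist p y.
Proof.
pose a := base_dot p / D.
have [t t01 [key1 key2]] : exists2 t, 0 <= t <= 1 & t * (t - a) <= 0 /\ (1 - t) * (a - t) <= 0.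
  have [a0|a0] := lerP a 0; first by exists 0; rewrite ?lexx ?ler01 //; split; lra.
  have [a1|a1] := lerP 1 a; first by exists 1; rewrite ?lexx ?ler01 //; split; lra.
  by exists a; [rewrite !ltW | split; lra].
have dot_p : base_dot p = a * D by rewrite mulfVK.
have dot_n : base_dot (lerp x y t) = t * D by rewrite /base_dot /lerp /sqdist /=; ring.
have cross_n : base_cross (lerp x y t) = 0 by rewrite /base_cross /lerp /=; ring.
exists (lerp x y t); first by exists t => //; apply/unit01P.
have k1 := ler_wpM2l (sqr_ge0 D) key1; have k2 := ler_wpM2l (sqr_ge0 D) key2.
split; rewrite -(ler_pM2l D_gt0) mulrDr [D * sqdist p _]base_frame_sqdist.
  by rewrite !base_frame_sqdistx dot_n dot_p cross_n; nra.
by rewrite !base_frame_sqdisty dot_n dot_p cross_n; nra.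
Qed.

(* [c] moved by [s |x y|] perpendicularly to the base line, away from it. *)
Definition perp_shift c s : pt R :=
  let k := if 0 <= base_cross c then s else - s in
  (c.1 + k * (y.2 - x.2), c.2 - k * (y.1 - x.1)).

Let base_frame_perp_shift c s :
  base_dot (perp_shift c s) = base_dot c /\
  base_cross (perp_shift c s) = base_cross c + (if 0 <= base_cross c then s else - s) * D.
Proof. by rewrite /perp_shift /base_dot /base_cross /sqdist /=; split; ring. Qed.

Lemma sqdist_perp_shift_center c s : sqdist (perp_shift c s) c = s ^+ 2 * D.
Proof. by rewrite /perp_shift /sqdist /=; case: ifP => _; ring. Qed.

Lemma lerp_perp_shift c s t : lerp c (perp_shift c s) t = perp_shift c (t * s).
Proof. by rewrite /perp_shift /lerp /=; case: ifP => _; congr pair; ring. Qed.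

Lemma sqdist_perp_shift c s :
  sqdist (perp_shift c s) x = sqdist c x + s * (2 * `|base_cross c| + s * D) /\
  sqdist (perp_shift c s) y = sqdist c y + s * (2 * `|base_cross c| + s * D).
Proof.
have [edot ecross] := base_frame_perp_shift c s.
set k := (if _ then _ else _) in ecross.
have [k_cross k_sqr] : k * base_cross c = s * `|base_cross c| /\ k ^+ 2 = s ^+ 2.
  rewrite /k; case: (lerP 0 (base_cross c)) => c0.
    by rewrite ger0_norm //; split; ring.
  by rewrite ltr0_norm // sqrrN; split; ring.
split; apply: (mulfI D_neq0); rewrite [RHS]mulrDr.
  rewrite !base_frame_sqdistx edot ecross.
  transitivity (base_dot c ^+ 2 + base_cross c ^+ 2
                 + 2 * (k * base_cross c) * D + k ^+ 2 * D ^+ 2); first by ring.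
  by rewrite k_cross k_sqr; ring.
rewrite !base_frame_sqdisty edot ecross.
transitivity ((D - base_dot c) ^+ 2 + base_cross c ^+ 2
               + 2 * (k * base_cross c) * D + k ^+ 2 * D ^+ 2); first by ring.
by rewrite k_cross k_sqr; ring.
Qed.

End BaseFrame.
End PlaneGeometry.

Section PlaneTopology.
Variable R : realType.
Implicit Types (p q x y z : pt R) (S : set (pt R)).

Lemma sqdist_continuous z : continuous (fun p => sqdist p z).
Proof.
have -> : (fun p => sqdist p z) = fun p => (p.1 - z.1) * (p.1 - z.1) + (p.2 - z.2) * (p.2 - z.2).
  by apply: funext => p; rewrite /sqdist !expr2.
by move=> p; apply: cvgD; apply: cvgM; apply: cvgB;
  first [exact: cvg_fst | exact: cvg_snd | exact: cvg_cst].
Qed.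

Lemma lerp_continuous p q (t : R) : {for t, continuous (lerp p q)}.
Proof.
have cR (a b : R) : {for t, continuous (fun s : R => (1 - s) * a + s * b)}.
  by apply: cvgD; apply: cvgM;
    first [exact: cvg_id | exact: cvg_cst | apply: cvgB; [exact: cvg_cst | exact: cvg_id]].
exact: cvg_pair (cR _ _) (cR _ _).
Qed.

Lemma open_sqdist_lt z e : open [set p | sqdist p z < e].
Proof.
apply: (@open_comp _ _ (fun p => sqdist p z) [set r | r < e]); last exact: open_lt.
by move=> p _; exact: sqdist_continuous.
Qed.

Lemma interior_sqdistP S z :
  interior S z <-> exists2 e, 0 < e & [set w | sqdist w z < e] `<=` S.
Proof.
split => [|[e e0 sub]]; last first.
  apply: (filterS sub); apply: open_nbhs_nbhs; split; first exact: open_sqdist_lt.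
  by rewrite /= sqdistxx.
rewrite /interior nbhs_ballP => -[r /= r0 sub]; exists (r ^+ 2); first exact: exprn_gt0.
have abs_lt (a : R) : a ^+ 2 < r ^+ 2 -> `|a| < r.
  by move=> h; rewrite ltr_norml; apply/andP; split; nra.
move=> w /= wz; apply: sub; split; apply: abs_lt; move: wz; rewrite /sqdist.
  by have := sqr_ge0 (w.2 - z.2); rewrite -sqrrN opprB; lra.
by have := sqr_ge0 (w.1 - z.1); rewrite -[(z.2 - _) ^+ 2]sqrrN opprB; lra.
Qed.

Lemma closed_boundaryE S z : closed S -> boundary S z <-> S z /\ ~ interior S z.
Proof. by move=> /closure_id cS; rewrite /boundary -cS. Qed.

Section SymmetricSet.
Variables (x y : pt R) (S : set (pt R)).
Hypotheses (xy : x != y) (symS : symmetric_set S x y).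

Lemma interior_reflect z : interior S z -> interior S (reflect_line x y z).
Proof.
move=> /interior_sqdistP[e e0 sub]; apply/interior_sqdistP; exists e => // w wz.
apply/(symS w).2/sub; rewrite /= -[z](reflect_lineK xy) sqdist_reflect //.
Qed.

Lemma boundary_reflect z : closed S -> boundary S z -> boundary S (reflect_line x y z).
Proof.
move=> cS /(closed_boundaryE _ cS)[Sz nIz]; apply/(closed_boundaryE _ cS); split.
  exact/(symS z).1.
by move=> /interior_reflect; rewrite reflect_lineK.
Qed.

End SymmetricSet.

(* Otherwise the preimage of [S] would be open and closed in the connected [[0, 1]]. *)
Lemma exists_boundary_lerp S p q : closed S -> S p -> ~ S q ->
  exists t, [/\ 0 <= t, t < 1 & boundary S (lerp p q t)].
Proof.
move=> cS Sp nSq; apply: contrapT => nbd.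
have inS_interior t : unit01 t -> S (lerp p q t) -> interior S (lerp p q t).
  move=> /unit01P/andP[t0 t1] St; apply: contrapT => nIt; apply: nbd; exists t.
  split => //; last exact/closed_boundaryE.
  by rewrite lt_neqAle t1 andbT; apply: contraPneq nSq => t1E; rewrite t1E lerp1 in St.
have : @unit01 R `&` (lerp p q @^-1` S) = @unit01 R.
  apply: segment_connected.
  - by exists 0; split; [exact: unit01_0 | rewrite /= lerp0].
  - exists (lerp p q @^-1` interior S).
      by apply: open_comp; [move=> t _; exact: lerp_continuous | exact: open_interior].
    apply/seteqP; split => t [ut St]; split => //; first exact: inS_interior.
    exact: interior_subset St.
  - exists (lerp p q @^-1` S) => //.
    by apply: preimage_closed => // t _; exact: lerp_continuous.
by move=> /seteqP[_ /(_ 1 unit01_1) [_]]; rewrite /= lerp1.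
Qed.

Lemma compact_sqdist_ub S z : compact S -> exists M, forall w, S w -> sqdist w z <= M.
Proof.
move=> cpS; have [[w0 Sw0]|S0] := pselect (S !=set0); last first.
  by exists 0 => w Sw; exfalso; apply: S0; exists w.
have [m _ mmax] := compact_EVT_max (ex_intro _ w0 Sw0) cpS
  (continuous_subspaceT (sqdist_continuous (z := z))).
by exists (sqdist m z) => w Sw; apply: mmax; rewrite inE.
Qed.

End PlaneTopology.

Section Kirszbraun.
Variable R : realType.

Lemma sum_pairwise_sqr (I : finType) (m u : I -> R) : \sum_i m i = 1 ->
  \sum_i \sum_j m i * m j * (u i - u j) ^+ 2
  = 2 * (\sum_i m i * u i ^+ 2 - (\sum_i m i * u i) ^+ 2).
Proof.
move=> m1.
have E i j : m i * m j * (u i - u j) ^+ 2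
    = m j * (m i * u i ^+ 2) + m i * (m j * u j ^+ 2) - 2 * (m i * u i) * (m j * u j).
  by ring.
under eq_bigr => i _ do under eq_bigr => j _ do rewrite E.
under eq_bigr => i _ do rewrite sumrB big_split /= -mulr_suml -!mulr_sumr m1.
rewrite sumrB big_split /= -mulr_suml -!mulr_sumr m1 -mulr_suml -mulr_sumr.
ring.
Qed.

Definition sqnorm (p : pt R) : R := p.1 ^+ 2 + p.2 ^+ 2.

Section Barycenter.
Variable I : finType.
Implicit Types (z : I -> pt R) (m u : I -> R).

Definition barycenter z m : pt R := (\sum_i m i * (z i).1, \sum_i m i * (z i).2).

Definition simplex m := (forall i, 0 <= m i) /\ \sum_i m i = 1.

Lemma sum_pairwise_sqdist z m : \sum_i m i = 1 ->
  \sum_i \sum_j m i * m j * sqdist (z i) (z j)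
  = 2 * (\sum_i m i * sqnorm (z i) - sqnorm (barycenter z m)).
Proof.
move=> m1; rewrite /sqdist /sqnorm /barycenter /=.
under eq_bigr => i _ do under eq_bigr => j _ do rewrite mulrDr.
under eq_bigr => i _ do rewrite big_split /=.
rewrite big_split /= !sum_pairwise_sqr //.
under [X in _ = 2 * (X - _)]eq_bigr => i _ do rewrite mulrDr.
rewrite big_split /=; ring.
Qed.

Lemma sum_sqdist_barycenter z m p : \sum_i m i = 1 ->
  \sum_i m i * sqdist p (z i)
  = sqdist p (barycenter z m) + (\sum_i m i * sqnorm (z i) - sqnorm (barycenter z m)).
Proof.
move=> m1.
have E i : m i * sqdist p (z i) = m i * sqnorm p
    - 2 * p.1 * (m i * (z i).1) - 2 * p.2 * (m i * (z i).2) + m i * sqnorm (z i).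
  by rewrite /sqdist /sqnorm; ring.
under eq_bigr => i _ do rewrite E.
rewrite big_split /= !sumrB -mulr_suml m1 -!mulr_sumr /sqdist /sqnorm /barycenter /=; ring.
Qed.

Definition move_to m i s : I -> R := fun j => (1 - s) * m j + s * (j == i)%:R.

Lemma sum_move_to m i s u :
  \sum_j move_to m i s j * u j = (1 - s) * \sum_j m j * u j + s * u i.
Proof.
have delta : \sum_j (j == i)%:R * u j = u i.
  by rewrite (bigD1 i) //= eqxx mul1r big1 ?addr0 // => j /negbTE ->; rewrite mul0r.
under eq_bigr => j _ do rewrite mulrDl -!mulrA.
by rewrite big_split /= -!mulr_sumr delta.
Qed.

Lemma simplex_move_to m i s : simplex m -> 0 <= s <= 1 -> simplex (move_to m i s).
Proof.
move=> [m0 m1] /andP[s0 s1]; split => [j|].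
  by rewrite addr_ge0 ?mulr_ge0 ?subr_ge0 ?ler0n.
have := sum_move_to m i s (fun=> 1); under eq_bigr do rewrite mulr1.
by move=> ->; under eq_bigr do rewrite mulr1; rewrite m1; ring.
Qed.

End Barycenter.

Lemma le0_of_le_scale (a b : R) : 0 <= b -> (forall s, 0 < s <= 1 -> a <= s * b) -> a <= 0.
Proof.
move=> b0 H; rewrite leNgt; apply/negP => a0.
have ab1 : 0 < a + b + 1 by lra.
pose s := a / (a + b + 1).
have s0 : 0 < s by rewrite divr_gt0.
have s1 : s <= 1 by rewrite ler_pdivrMr // mul1r; lra.
have := H s; rewrite s0 s1 => /(_ isT).
rewrite -(ler_pM2r ab1) mulrAC mulfVK ?gt_eqF //; nra.
Qed.

Section Potential.
Variables (I : finType) (x y : I -> pt R) (q : pt R).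
Implicit Types (m : I -> R).

(* Valentine's argument: the barycenter of [x] for weights maximising this
   potential on the simplex is the point sought in Kirszbraun's theorem. *)
Definition kirszbraun_potential m :=
  \sum_i m i * (sqnorm (x i) - sqdist q (y i)) - sqnorm (barycenter x m).

Local Notation P := kirszbraun_potential.

Lemma kirszbraun_potential_le0 m :
  (forall i j, sqdist (x i) (x j) <= sqdist (y i) (y j)) -> simplex m -> P m <= 0.
Proof.
move=> xy [m0 m1].
have pair_le : \sum_i \sum_j m i * m j * sqdist (x i) (x j)
    <= \sum_i \sum_j m i * m j * sqdist (y i) (y j).
  by do 2 (apply: ler_sum => ? _); rewrite ler_wpM2l ?mulr_ge0.
rewrite !sum_pairwise_sqdist // in pair_le.
rewrite /P; under eq_bigr do rewrite mulrBr.
rewrite sumrB sum_sqdist_barycenter //.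
have := sqdist_ge0 q (barycenter y m); lra.
Qed.

Lemma kirszbraun_potential_move_to m i s : P (move_to m i s)
  = P m + s * (sqdist (barycenter x m) (x i) - sqdist q (y i) - P m)
    - s ^+ 2 * sqdist (x i) (barycenter x m).
Proof. by rewrite /P /barycenter !sum_move_to /sqnorm /sqdist /=; ring. Qed.

Lemma kirszbraun_potential_argmax m : simplex m ->
  (forall m', simplex m' -> P m' <= P m) ->
  forall i, sqdist (barycenter x m) (x i) - sqdist q (y i) <= P m.
Proof.
move=> sm mmax i; rewrite -subr_le0.
apply: (le0_of_le_scale (sqdist_ge0 (x i) (barycenter x m))) => s /andP[s0 s1].
have s01 : 0 <= s <= 1 by rewrite ltW.
have := mmax _ (simplex_move_to i sm s01).
rewrite kirszbraun_potential_move_to -subr_le0 => h.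
rewrite -(ler_pM2l s0) mulrA -expr2; lra.
Qed.

End Potential.

Lemma continuous_sum (T : topologicalType) (J : Type) (r : seq J) (F : J -> T -> R) :
  (forall j, continuous (F j)) -> continuous (fun t => \sum_(j <- r) F j t).
Proof.
move=> cF t; elim: r => [|j r IH].
  rewrite (_ : (fun _ => _) = cst 0); first exact: cvg_cst.
  by apply: funext => s; rewrite big_nil.
rewrite (_ : (fun _ => _) = (fun s => F j s + \sum_(j <- r) F j s)).
  exact: (continuousD (cF j t) IH).
by apply: funext => s; rewrite big_cons.
Qed.

Section SimplexMax.
Variable I : finType.

(* Weights on [I] as the coordinates of a row vector, to use compactness of
   closed boxes of ['rV_#|I|]. *)
Definition rV_coords (v : 'rV[R]_#|I|) : I -> R := fun i => v ord0 (enum_rank i).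

Lemma simplex_le1 (m : I -> R) i : simplex m -> m i <= 1.
Proof.
move=> [m0 <-]; rewrite (bigD1 i) //= lerDl; exact: sumr_ge0.
Qed.

Lemma exists_simplex_argmax (F : (I -> R) -> R) (i0 : I) :
  continuous (F \o rV_coords) ->
  exists2 m, simplex m & forall m', simplex m' -> F m' <= F m.
Proof.
move=> cF.
pose S := [set v | simplex (rV_coords v)].
have Sne : S !=set0.
  exists (\row_j (enum_val j == i0)%:R); split => [i|]; rewrite /rV_coords.
    by rewrite mxE ler0n.
  under eq_bigr do rewrite mxE enum_rankK.
  by rewrite (bigD1 i0) //= eqxx big1 ?addr0 // => i /negbTE ->.
have cS : closed S.
  have -> : S = \bigcap_(i in setT) [set v | 0 <= rV_coords v i]
               `&` [set v | \sum_i rV_coords v i = 1].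
    by apply/seteqP; split => v [hv1 hv2]; split => // i; [move=> _; exact: hv1 | exact: hv1].
  apply: closedI.
    apply: closed_bigI => i _.
    apply: (@preimage_closed _ _ (fun v => rV_coords v i) [set x | 0 <= x]).
      by move=> v _; exact: coord_continuous.
    exact: closed_ge.
  apply: (@preimage_closed _ _ (fun v => \sum_i rV_coords v i) [set x | x = 1]).
    by move=> v _; apply: continuous_sum => i; exact: coord_continuous.
  exact: closed_eq.
have cpS : compact S.
  have box : compact [set v : 'rV[R]_#|I| | forall j, v ord0 j \in `[(0 : R), 1]].
    by apply: (@rV_compact _ _ (fun=> `[(0 : R), 1]%classic)) => _; exact: segment_compact.
  apply: (subclosed_compact cS box) => v Sv j; rewrite -[j]enum_valK in_itv /=.
  by apply/andP; split; [exact: Sv.1 | exact: simplex_le1 Sv].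
have [v Sv vmax] := EVT_max_rV Sne cpS (continuous_subspaceT cF).
rewrite inE in Sv; exists (rV_coords v) => // m sm.
have e : rV_coords (\row_j m (enum_val j)) = m.
  by apply: funext => i; rewrite /rV_coords mxE enum_rankK.
by have := vmax (\row_j m (enum_val j)); rewrite !inE /S /= e; apply.
Qed.

End SimplexMax.

Lemma kirszbraun_potential_continuous (I : finType) (x y : I -> pt R) (q : pt R) :
  continuous (kirszbraun_potential x y q \o @rV_coords I).
Proof.
pose S (u : I -> R) v := \sum_i rV_coords v i * u i.
have cS u : continuous (S u).
  apply: continuous_sum => i v.
  by apply: continuousM; [exact: coord_continuous | exact: cst_continuous].
have -> : kirszbraun_potential x y q \o @rV_coords I = S (fun i => sqnorm (x i) - sqdist q (y i))
    - (((fun t : R => t ^+ 2) \o S (fun i => (x i).1))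
       + ((fun t : R => t ^+ 2) \o S (fun i => (x i).2))).
  by [].
move=> v; apply: continuousB; first exact: cS.
by apply: continuousD; apply: continuous_comp; try exact: cS; exact: exprn_continuous.
Qed.

Theorem kirszbraun_plane (I : finType) (x y : I -> pt R) (q : pt R) :
  (forall i j, sqdist (x i) (x j) <= sqdist (y i) (y j)) ->
  exists p, forall i, sqdist p (x i) <= sqdist q (y i).
Proof.
move=> xy; case: (pickP (fun _ : I => true)) => [i0 _|I0]; last first.
  by exists q => i; have := I0 i.
have [m sm mmax] :=
  exists_simplex_argmax i0 (kirszbraun_potential_continuous (x := x) (y := y) (q := q)).
exists (barycenter x m) => i.
have := kirszbraun_potential_argmax sm mmax i.
have := kirszbraun_potential_le0 q xy sm; lra.
Qed.
End Kirszbraun.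

Section Adornment.
Variable R : realType.
Implicit Types (p q x y z : pt R) (s t : R).

Definition strictly_closer x y p q := sqdist p x < sqdist q x /\ sqdist p y < sqdist q y.

Section SlenderArc.
Variables (x y : pt R) (g : R -> pt R).

Definition slender_arc :=
  [/\ {in @unit01 R &, injective g}, g 0 = x, g 1 = y &
      forall s t, unit01 s -> unit01 t -> s <= t ->
        sqdist (g s) x <= sqdist (g t) x /\ sqdist (g t) y <= sqdist (g s) y].

Lemma slender_arcP : arc_from_to g x y -> slender_side g x y -> slender_arc.
Proof.
move=> [_ ginj g0 g1] sl; split => // s t us ut st.
by have [] := sl s t us ut st; rewrite !ler_edist.
Qed.

Hypothesis arc_g : slender_arc.

Lemma slender_arc_lens s : unit01 s -> sqdist (g s) x <= sqdist y x /\ sqdist (g s) y <= sqdist y x.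
Proof.
case: arc_g => _ g0 g1 mono us; have /unit01P/andP[s0 s1] := us; split.
  by have [+ _] := mono s 1 us unit01_1 s1; rewrite g1.
by have [_ +] := mono 0 s unit01_0 us s0; rewrite g0 (sqdistC x y).
Qed.

Lemma slender_arc_antichain s t : unit01 s -> unit01 t -> ~ strictly_closer x y (g s) (g t).
Proof.
case: arc_g => _ _ _ mono us ut [ltx lty]; case: (lerP s t) => st.
  by have [_ h] := mono s t us ut st; lra.
by have [h _] := mono t s ut us (ltW st); lra.
Qed.

(* For [s < t], the point of the arc halfway between [s] and [t] would have the
   same distances to [x] and [y] as [g s] and its mirror image [g t], hence
   coincide with one of them. *)
Lemma slender_arc_reflect_eq s t : x != y -> unit01 s -> unit01 t ->
  reflect_line x y (g s) = g t -> s = t.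
Proof.
case: arc_g => ginj _ _ mono xy.
have lt_case u v : unit01 u -> unit01 v -> u < v -> reflect_line x y (g u) = g v -> False.
  move=> uu uv lt_uv E; pose w := (u + v) / 2.
  have uw : u < w by rewrite /w; lra.
  have wv : w < v by rewrite /w; lra.
  have uwv : unit01 w.
    by move: uu uv => /unit01P/andP[? _] /unit01P/andP[_ ?]; apply/unit01P/andP; split; lra.
  have [a1 a2] := mono u w uu uwv (ltW uw); have [b1 b2] := mono w v uwv uv (ltW wv).
  have ex : sqdist (g v) x = sqdist (g u) x by rewrite -E sqdist_reflectx.
  have ey : sqdist (g v) y = sqdist (g u) y by rewrite -E sqdist_reflecty.
  have ewx : sqdist (g w) x = sqdist (g u) x by apply/eqP; rewrite eq_le; apply/andP; split; lra.
  have ewy : sqdist (g w) y = sqdist (g u) y by apply/eqP; rewrite eq_le; apply/andP; split; lra.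
  have [e|e] := eq_sqdist_base xy ewx ewy.
    by have := ginj _ _ (mem_set uwv) (mem_set uu) e; lra.
  by rewrite E in e; have := ginj _ _ (mem_set uwv) (mem_set uv) e; lra.
move=> us ut E; case: (ltgtP s t) => // st; first by case: (lt_case s t us ut st E).
by case: (lt_case t s ut us st); rewrite -E reflect_lineK.
Qed.

End SlenderArc.

Section BoundaryAntichain.
Variables (S : set (pt R)) (x y : pt R) (g1 g2 : R -> pt R).
Hypotheses (xy : x != y) (symS : symmetric_set S x y) (cS : closed S)
  (arc1 : slender_arc x y g1) (arc2 : slender_arc x y g2)
  (bdS : boundary S = g1 @` @unit01 R `|` g2 @` @unit01 R).

Let side (k : bool) := if k then g1 else g2.

Let arc k : slender_arc x y (side k). Proof. by case: k. Qed.

Let on_side z : boundary S z -> exists k, exists2 s, unit01 s & side k s = z.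
Proof. by rewrite bdS => -[[s us <-]|[s us <-]]; [exists true | exists false]; exists s. Qed.

Local Notation comparable p q := (strictly_closer x y p q \/ strictly_closer x y q p).

(* If [b] were not on the base line, its mirror image would be a boundary point
   on the side opposite to [b], comparable with the boundary point [b']. *)
Lemma boundary_comparable_fixed b b' : boundary S b -> boundary S b' ->
  comparable b b' -> reflect_line x y b = b.
Proof.
move=> bb bb' cmp.
have [j [s us eb]] := on_side bb; have [k [t ut eb']] := on_side bb'.
have [l [u uu eu]] := on_side (boundary_reflect xy symS cS bb).
have incomparable i v w : unit01 v -> unit01 w -> ~ comparable (side i v) (side i w).
  by move=> uv uw [] /slender_arc_antichain; apply.
have [lj|lj] := eqVneq l j.
  move: eu; rewrite -eb lj => eu.
  by rewrite -eu (slender_arc_reflect_eq (arc j) xy us uu (esym eu)).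
have [kj|kj] := eqVneq k j.
  by rewrite kj in eb'; exfalso; apply: (incomparable j s t us ut); rewrite eb eb'.
have lk : l = k by move: (l) (k) (j) lj kj => [] [] [].
rewrite lk in eu; exfalso; apply: (incomparable k u t uu ut); rewrite eu eb' /strictly_closer.
by rewrite sqdist_reflectx ?sqdist_reflecty.
Qed.

Lemma boundary_antichain b b' : boundary S b -> boundary S b' -> ~ strictly_closer x y b b'.
Proof.
move=> bb bb' cl.
have /(reflect_line_fixed xy) cb := boundary_comparable_fixed bb bb' (or_introl cl).
have /(reflect_line_fixed xy) cb' := boundary_comparable_fixed bb' bb (or_intror cl).
have [j [s us eb]] := on_side bb; have [k [t ut eb']] := on_side bb'.
have [bx b_y] := slender_arc_lens (arc j) us; have [b'x b'y] := slender_arc_lens (arc k) ut.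
rewrite eb in bx b_y; rewrite eb' in b'x b'y.
exact: (base_line_antichain xy cb cb' bx b_y b'x b'y cl.1 cl.2).
Qed.

End BoundaryAntichain.

(* Push [c] away from the base line until it leaves the bounded set [S]. *)
Lemma exists_boundary_farther (S : set (pt R)) x y c : x != y -> compact S -> S c ->
  exists2 z, boundary S z & sqdist c x <= sqdist z x /\ sqdist c y <= sqdist z y.
Proof.
move=> xy cpS Sc; have cS : closed S by exact: compact_closed (@norm_hausdorff _ _) cpS.
have [M SM] := compact_sqdist_ub x cpS.
have D0 : 0 < sqdist y x by rewrite sqdist_gt0 eq_sym.
pose grow u := u * (2 * `|base_cross x y c| + u * sqdist y x).
have grow_ge0 u : 0 <= u -> 0 <= grow u.
  by move=> u0; rewrite /grow; have := normr_ge0 (base_cross x y c); nra.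
pose s := 1 + `|M| / sqdist y x.
have s1 : 1 <= s by rewrite lerDl divr_ge0 // ltW.
have out : ~ S (perp_shift x y c s).
  move=> /SM; have [-> _] := sqdist_perp_shift xy c s; rewrite -/(grow s).
  have sD : M < s * sqdist y x.
    by rewrite mulrDl mul1r mulfVK ?gt_eqF //; have := ler_norm M; lra.
  have : s * sqdist y x <= grow s.
    have := mulr_gt0 (lt_le_trans ltr01 s1) D0; have := normr_ge0 (base_cross x y c).
    rewrite /grow; nra.
  have := sqdist_ge0 c x; have := ler_norm M; nra.
have [t [t0 t1 bd]] := exists_boundary_lerp cS Sc out.
exists (lerp c (perp_shift x y c s) t) => //.
rewrite lerp_perp_shift; have [-> ->] := sqdist_perp_shift xy c (t * s); rewrite -/(grow _).
by have := grow_ge0 (t * s) (mulr_ge0 t0 (le_trans ler01 s1)); split; lra.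
Qed.

Section SymSlenderAdornment.
Variables (S : set (pt R)) (x y : pt R).
Hypothesis adS : sym_slender_adornment S x y.

Lemma sym_slender_adornment_base : x != y.
Proof. by case: adS => -[g1 [g2 [[[_ []]]]]]. Qed.

(* Otherwise, walking from the foot [n] of [p] on the base towards [p], one leaves
   [S] at a boundary point strictly closer to [x] and [y] than [p], hence than [c]
   and than a boundary point farther than [c]. *)
Lemma sym_slender_adornment_lens c p : S c ->
  sqdist p x <= sqdist c x -> sqdist p y <= sqdist c y -> S p.
Proof.
case: adS => -[g1 [g2 [[[cpS [_ xy]] _ segS [ar1 ar2] bdS] [sl1 sl2]]]] symS Sc px py.
have cS : closed S by exact: compact_closed (@norm_hausdorff _ _) cpS.
apply: contrapT => nSp.
have [n segn [nx ny]] := segment_foot xy p.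
have np : n != p by apply/eqP => e; apply: nSp; rewrite -e; exact: segS.
have [t [t0 t1 bd]] := exists_boundary_lerp cS (segS n segn) nSp.
have t01 : 0 <= t < 1 by rewrite t0 t1.
have [z bz [cz_x cz_y]] := exists_boundary_farther xy cpS Sc.
apply: (boundary_antichain xy symS cS (slender_arcP ar1 sl1) (slender_arcP ar2 sl2) bdS bd bz).
have := sqdist_lerp_lt t01 np nx; have := sqdist_lerp_lt t01 np ny.
by split; lra.
Qed.

Lemma sym_slender_adornment_interior c p : S c ->
  sqdist p x < sqdist c x -> sqdist p y < sqdist c y -> interior S p.
Proof.
move=> Sc px py.
pose U := [set w | sqdist w x < sqdist c x] `&` [set w | sqdist w y < sqdist c y].
have US : U `<=` S by move=> w [wx wy]; apply: (sym_slender_adornment_lens Sc); exact: ltW.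
apply: (filterS US); apply: open_nbhs_nbhs; split; last by split.
by apply: openI; exact: open_sqdist_lt.
Qed.

End SymSlenderAdornment.
End Adornment.

Section Expansion.
Variable R : realType.
Implicit Types (p q u v : pt R).

Lemma interior_strictly_farther (T : set (pt R)) u v q : u != v -> interior T q ->
  exists2 q', T q' & strictly_closer u v q q'.
Proof.
move=> uv /interior_sqdistP[e e0 sub].
have D0 : 0 < sqdist v u by rewrite sqdist_gt0 eq_sym.
pose s := Num.min 1 (e / (2 * sqdist v u)).
have s0 : 0 < s by rewrite lt_min ltr01 divr_gt0 ?mulr_gt0.
have s1 : s <= 1 by rewrite ge_min lexx.
have sD : s * sqdist v u <= e / 2.
  have : s <= e / (2 * sqdist v u) by rewrite ge_min lexx orbT.
  rewrite ler_pdivlMr ?mulr_gt0 //; lra.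
exists (perp_shift u v q s).
  by apply: sub; rewrite /= sqdist_perp_shift_center; nra.
rewrite /strictly_closer; have [-> ->] := sqdist_perp_shift uv q s.
have := mulr_ge0 (ltW s0) (normr_ge0 (base_cross u v q)).
have := mulr_gt0 s0 (mulr_gt0 s0 D0); split; lra.
Qed.

Lemma chain_point0 n (V : 'I_n.+1 -> pt R) i : chain_point V i 0 = V i.
Proof. exact: lerp0. Qed.

Lemma chain_point1 n (V : 'I_n.+1 -> pt R) i : chain_point V i 1 = V (bar_end i).
Proof. exact: lerp1. Qed.

Section Bars.
Variables (cl : bool) (n : nat) (X Y : 'I_n.+1 -> pt R).
Variables (A : 'I_n.+1 -> set (pt R)) (f : 'I_n.+1 -> pt R -> pt R).
Hypotheses (sameXY : same_chain cl X Y) (XY : expansion cl X Y).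
Hypothesis adA : forall i, is_bar cl i -> sym_slender_adornment (A i) (X i) (X (bar_end i)).
Hypothesis place : forall i, is_bar cl i ->
  [/\ plane_isometry (f i), f i (X i) = Y i & f i (X (bar_end i)) = Y (bar_end i)].

Lemma expansion_kirszbraun a b q : is_bar cl a -> is_bar cl b ->
  exists p, [/\ sqdist p (X a) <= sqdist q (Y a),
                sqdist p (X (bar_end a)) <= sqdist q (Y (bar_end a)),
                sqdist p (X b) <= sqdist q (Y b) &
                sqdist p (X (bar_end b)) <= sqdist q (Y (bar_end b))].
Proof.
move=> ba bb.
pose bar (k : bool * bool) := if k.1 then a else b.
pose par (k : bool * bool) : R := if k.2 then 1 else 0.
have bar_ok k : is_bar cl (bar k) by rewrite /bar; case: k.1.
have par_ok k : unit01 (par k) by rewrite /par; case: k.2; [exact: unit01_1 | exact: unit01_0].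
have [|p hp] := @kirszbraun_plane R _ (fun k => chain_point X (bar k) (par k))
                   (fun k => chain_point Y (bar k) (par k)) q.
  by move=> k l; rewrite -ler_edist; apply: XY.
exists p; move: (hp (true, false)) (hp (true, true)) (hp (false, false)) (hp (false, true)).
by rewrite /bar /par /= !chain_point0 !chain_point1.
Qed.

Lemma same_chain_bar_neq i : is_bar cl i -> Y i != Y (bar_end i).
Proof.
move=> bi; rewrite -sqdist_gt0 (eq_sqdist_of_edist (sameXY bi)) sqdist_gt0.
exact: sym_slender_adornment_base (adA bi).
Qed.

Lemma overlap_preimage a b q : is_bar cl a -> is_bar cl b ->
  (f a @` A a) q -> interior (f b @` A b) q -> exists p, A a p /\ interior (A b) p.
Proof.
move=> ba bb; have [isoa fa fa'] := place ba; have [isob fb fb'] := place bb.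
move=> [p0 Ap0 <-] /(interior_strictly_farther (same_chain_bar_neq bb)).
move=> [_ [p1 Bp1 <-] [far far']].
have [p [pa pa' pb pb']] := expansion_kirszbraun (f a p0) ba bb.
exists p; split.
  apply: (sym_slender_adornment_lens (adA ba) Ap0).
    by rewrite -(sqdist_isometry p0 _ isoa) fa.
  by rewrite -(sqdist_isometry p0 _ isoa) fa'.
apply: (sym_slender_adornment_interior (adA bb) Bp1).
  by rewrite -(sqdist_isometry p1 _ isob) fb; exact: le_lt_trans pb far.
by rewrite -(sqdist_isometry p1 _ isob) fb'; exact: le_lt_trans pb' far'.
Qed.

End Bars.
End Expansion.

Theorem mainTheorem6 (R : realType) (closed : bool) (n : nat)
  (X Y : 'I_n.+1 -> pt R) (A : 'I_n.+1 -> set (pt R))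
  (f : 'I_n.+1 -> pt R -> pt R) :
  same_chain closed X Y ->
  expansion closed X Y ->
  (forall i, is_bar closed i ->
     sym_slender_adornment (A i) (X i) (X (bar_end i))) ->
  (forall i, is_bar closed i ->
     [/\ plane_isometry (f i), f i (X i) = Y i & f i (X (bar_end i)) = Y (bar_end i)]) ->
  (forall i j, is_bar closed i -> is_bar closed j -> i != j ->
     ~ overlap (A i) (A j)) ->
  forall i j, is_bar closed i -> is_bar closed j -> i != j ->
     ~ overlap (f i @` A i) (f j @` A j).
Proof.
move=> sameXY XY adA place disjA i j bi bj ij [q [[Fi Ij] | [Fj Ii]]].
  have [p [Ap Ip]] := overlap_preimage sameXY XY adA place bi bj Fi Ij.
  by apply: (disjA i j bi bj ij); exists p; left.
have [p [Ap Ip]] := overlap_preimage sameXY XY adA place bj bi Fj Ii.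
by apply: (disjA i j bi bj ij); exists p; right.
Qed.
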